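(* Let $n\ge1$ and let $d>n+1$ be a prime. Let $A_1=\dots=A_n=C_1=\dots=C_n=\mathbb{C}^d$ with computational basis $\{|0\rangle,\dots,|d-1\rangle\}$, and let $M_n=I_n+E_n$ be the $n\times n$ matrix with $2$ on the diagonal and $1$ everywhere else ($I_n$ the identity, $E_n$ the all-ones matrix). Then $U_{d,n}|\vec x\rangle=|M_n\vec x\rangle$, where $|\vec x\rangle=|x_1\rangle\cdots|x_n\rangle$ for $\vec x\in\{0,\dots,d-1\}^n$ and all arithmetic is modulo $d$, defines a maximally $I_3$-scrambling unitary $U_{d,n}:A_1\otimes\cdots\otimes A_n\to C_1\otimes\cdots\otimes C_n$, i.e. \[ I_3(A_i;A_i^c;C_j)=-2\log\min\{|A_i|,|A_i^c|,|C_j|,|C_j^c|\}\quad\text{for all }i,j. \]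
   Context: The Choi state of $U$ is $\rho=U_{A_1'\dots A_n'\to C_1\dots C_n}\bigl(\bigotimes_i\Phi^+_{A_iA_i'}\bigr)U^\dagger$, with $\Phi^+_{XX'}=|X|^{-1/2}\sum_k|kk\rangle$; informations are evaluated on it. $A_i^c$ (resp. $C_j^c$) denotes the composite of all input (resp. output) systems other than $A_i$ (resp. $C_j$), and $|X|$ denotes dimension. Entropies are von Neumann (base-2), $I(X;Y)=S(X)+S(Y)-S(XY)$, $I_3(X;Y;Z)=I(X;Y)+I(X;Z)-I(X;YZ)$. *)

From HB Require Import structures.
From mathcomp Require Import all_boot all_order all_algebra.
From mathcomp Require Import spectral.
From mathcomp Require Import complex.
From mathcomp Require Import reals exp.

Set Implicit Arguments.
Unset Strict Implicit.
Unset Printing Implicit Defensive.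

Import Order.TTheory GRing.Theory Num.Theory.
Local Open Scope ring_scope.

(* The eigenvalues (with multiplicity) are the roots of the            *)
(* characteristic polynomial, which splits over the closed field R[i]. *)

Definition spectrum (R : realType) (k : nat) (M : 'M[R[i]]_k) : seq R[i] :=
  sval (closed_field_poly_normal (char_poly M)).

Definition log2 (R : realType) (x : R) : R := ln x / ln 2.

Definition xlog2 (R : realType) (x : R) : R :=
  if x == 0 then 0 else x * log2 x.

Definition vN_entropy (R : realType) (k : nat) (M : 'M[R[i]]_k) : R :=
  - \sum_(z <- spectrum M) xlog2 (complex.Re z).

(* Multipartite systems: a finite set Sys of subsystems, each with     *)
(* computational basis indexed by the finite type Q.  A (mixed) state  *)
(* on the whole system is given by its matrix entries                  *)
(* rho s t = <s| rho |t> on basis configurations s t : Sys -> Q.        *)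

Definition cfg (Sys Q : finType) (X : {set Sys}) : finType :=
  {ffun {i : Sys | i \in X} -> Q}.

Lemma notin_setC_in (Sys : finType) (X : {set Sys}) (i : Sys) :
  i \notin X -> i \in ~: X.
Proof. by rewrite in_setC. Qed.

Definition glue (Sys Q : finType) (X : {set Sys})
    (a : cfg Q X) (c : cfg Q (~: X)) : {ffun Sys -> Q} :=
  [ffun i => match boolP (i \in X) with
             | AltTrue h => a (exist _ i h)
             | AltFalse h => c (exist _ i (notin_setC_in h))
             end].

Definition kernel (R : realType) (Sys Q : finType) :=
  {ffun Sys -> Q} -> {ffun Sys -> Q} -> R[i].

(* reduced density matrix rho_X = Tr_{X^c} rho, as a matrix indexed by
   (an enumeration of) the configurations of X *)
Definition reduced (R : realType) (Sys Q : finType) (rho : kernel R Sys Q)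
    (X : {set Sys}) : 'M[R[i]]_#|cfg Q X| :=
  \matrix_(i, j) \sum_(c : cfg Q (~: X))
      rho (glue (enum_val i) c) (glue (enum_val j) c).

Definition entropy (R : realType) (Sys Q : finType) (rho : kernel R Sys Q)
    (X : {set Sys}) : R := vN_entropy (reduced rho X).

Definition mutinf (R : realType) (Sys Q : finType) (rho : kernel R Sys Q)
    (X Y : {set Sys}) : R :=
  entropy rho X + entropy rho Y - entropy rho (X :|: Y).

Definition I3 (R : realType) (Sys Q : finType) (rho : kernel R Sys Q)
    (X Y Z : {set Sys}) : R :=
  mutinf rho X Y + mutinf rho X Z - mutinf rho X (Y :|: Z).

Definition dimsys (R : realType) (Sys Q : finType) (X : {set Sys}) : R :=
  (#|cfg Q X|)%:R.

(* Subsystems: inl i = A_i, inr j = C_j.  The register A_1..A_n (and   *)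
(* A_1'..A_n', C_1..C_n) has basis the column vectors 'cV[Q]_n; U is a *)
(* matrix indexed through enum_rank of these basis vectors.            *)

Definition Sys (n : nat) : finType := ('I_n + 'I_n)%type.

Definition Apart (n : nat) (Q : finType) (s : {ffun Sys n -> Q}) : 'cV[Q]_n :=
  \col_i s (inl i).
Definition Cpart (n : nat) (Q : finType) (s : {ffun Sys n -> Q}) : 'cV[Q]_n :=
  \col_j s (inr j).

(* amplitude of the maximally entangled state Phi^+_{AA'} (all n pairs)
   on |a>_A |a'>_{A'} : |AA'|^{-1/2}... i.e. |A|^{-1/2} [a = a'] *)
Definition phiplus (R : realType) (n : nat) (Q : finType)
    (a a' : 'cV[Q]_n) : R[i] :=
  ((Num.sqrt (#|'cV[Q]_n|%:R : R))^-1)%:C%C * (a == a')%:R.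

(* amplitude of (id_A (x) U)|Phi^+> on the configuration s of A_1..A_n C_1..C_n *)
Definition choi_amp (R : realType) (n : nat) (Q : finType)
    (U : 'M[R[i]]_#|'cV[Q]_n|) (s : {ffun Sys n -> Q}) : R[i] :=
  \sum_(a' : 'cV[Q]_n)
     U (enum_rank (Cpart s)) (enum_rank a') * phiplus R (Apart s) a'.

Definition choi (R : realType) (n : nat) (Q : finType)
    (U : 'M[R[i]]_#|'cV[Q]_n|) : kernel R (Sys n) Q :=
  fun s t => choi_amp U s * (choi_amp U t)^*%C.

Definition max_I3_scrambling (R : realType) (n : nat) (Q : finType)
    (U : 'M[R[i]]_#|'cV[Q]_n|) : Prop :=
  forall i j : 'I_n,
    let Ai  := [set (inl i : Sys n)] in
    let Aic := [set (inl k : Sys n) | k : 'I_n & k != i] in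
    let Cj  := [set (inr j : Sys n)] in
    let Cjc := [set (inr k : Sys n) | k : 'I_n & k != j] in
    I3 (choi U) Ai Aic Cj =
      - 2 * log2 (Num.min (Num.min (dimsys R Q Ai) (dimsys R Q Aic))
                          (Num.min (dimsys R Q Cj) (dimsys R Q Cjc))).

(* (d prime: 'F_d = Z/dZ, whose elements index |0>,...,|d-1>).          *)

Definition Mn (d n : nat) : 'M['F_d]_n := 1%:M + const_mx 1.

Definition Udn (R : realType) (d n : nat) : 'M[R[i]]_#|'cV['F_d]_n| :=
  \matrix_(y, x) ((enum_val y == Mn d n *m enum_val x)%:R).

From HB Require Import structures.
From mathcomp Require Import all_boot all_order all_algebra.
From mathcomp Require Import spectral complex reals exp.
From mathcomp Require Import ring.
Import Order.TTheory GRing.Theory Num.Theory.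
Local Open Scope ring_scope.
Set Implicit Arguments.
Unset Strict Implicit.
Unset Printing Implicit Defensive.

(* U_{d,n} permutes the computational basis along the linear bijection
   x |-> M_n x of 'F_d^n (M_n is invertible because n + 1 <> 0 mod d), so its
   Choi state is the uniform superposition over the subgroup
   V = {(a, M_n a)} of configurations of the 2n sites.  For any cut X | X^c
   of the sites, the reduced state on X is |V|^-1 B with
   B(x, y) = #{c | (x, c), (y, c) in V}, and B^2 = K L B where K and L count
   the elements of V supported in X and in X^c.  Hence rho_X has a flat
   spectrum and S(X) = log |V| - log K - log L.  Counting the solutions of the
   corresponding homogeneous linear systems (using 2 <> 0 and n <> 0 mod d)
   gives I(A_i;A_i^c) = I(A_i;C_j) = 0 and I(A_i;A_i^c C_j) = 2 log d when
   n > 1, so I3 = -2 log d; when n = 1, A_i^c is empty and I3 = S(empty) = 0. *)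

(* The library has these Z-module structures, but not their joins with the
   finite type structures. *)
HB.instance Definition _ (aT : finType) (rT : finZmodType) :=
  GRing.Zmodule.on {ffun aT -> rT}.
HB.instance Definition _ (G H : finZmodType) := GRing.Zmodule.on (G * H)%type.

Section Log2.
Variable R : realType.
Implicit Types x y : R.

Lemma log2_1 : log2 (1 : R) = 0.
Proof. by rewrite /log2 ln1 mul0r. Qed.

Lemma log2M x y : 0 < x -> 0 < y -> log2 (x * y) = log2 x + log2 y.
Proof. by move=> x_gt0 y_gt0; rewrite /log2 lnM ?posrE // mulrDl. Qed.

Lemma log2V x : 0 < x -> log2 x^-1 = - log2 x.
Proof. by move=> x_gt0; rewrite /log2 lnV ?posrE // mulNr. Qed.

Lemma log2_natM (m k : nat) : (0 < m)%N -> (0 < k)%N ->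
  log2 ((m * k)%:R : R) = log2 m%:R + log2 k%:R.
Proof. by move=> m_gt0 k_gt0; rewrite natrM log2M ?ltr0n. Qed.

Lemma log2_cofactor (c m N : nat) : (c * m = N)%N -> (0 < N)%N ->
  log2 (c%:R : R) = log2 N%:R - log2 m%:R.
Proof.
by move=> <-; rewrite muln_gt0 => /andP[c_gt0 m_gt0]; rewrite log2_natM // addrK.
Qed.

End Log2.

Lemma Re_sum (R : realType) (s : seq R[i]) :
  complex.Re (\sum_(z <- s) z) = \sum_(z <- s) complex.Re z.
Proof. exact: (raddf_sum (@complex.Re R : Rcomplex R -> R)). Qed.

Lemma eigenvalue_scaled_idem (F : fieldType) k (M : 'M[F]_k) (lam z : F) :
  M *m M = lam *: M -> eigenvalue M z -> z = 0 \/ z = lam.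
Proof.
move=> MM /eigenvalueP[v vM v_neq0].
have vMM_z : v *m M *m M = (z * z) *: v by rewrite vM -scalemxAl vM scalerA.
have vMM_lam : v *m M *m M = (lam * z) *: v.
  by rewrite -mulmxA MM -scalemxAr vM scalerA.
have /eqP : (z * z - lam * z) *: v = 0 by rewrite scalerBl -vMM_z -vMM_lam subrr.
rewrite scaler_eq0 (negbTE v_neq0) orbF -mulrBl mulf_eq0 subr_eq0.
by case/orP=> /eqP; [right | left].
Qed.

Section Spectrum.
Variables (R : realType) (k : nat).
Implicit Type M : 'M[R[i]]_k.

Lemma char_poly_spectrum M : char_poly M = \prod_(z <- spectrum M) ('X - z%:P).
Proof.
rewrite /spectrum; case: closed_field_poly_normal => s /= ->.
by rewrite (monicP (char_poly_monic M)) scale1r.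
Qed.

Lemma size_spectrum M : size (spectrum M) = k.
Proof.
by have := size_char_poly M; rewrite char_poly_spectrum size_prod_XsubC => -[].
Qed.

Lemma eigenvalue_spectrum M z : z \in spectrum M -> eigenvalue M z.
Proof. by rewrite eigenvalue_root_char char_poly_spectrum root_prod_XsubC. Qed.

Lemma sum_spectrum M : \sum_(z <- spectrum M) z = \tr M.
Proof.
have [k0 | k_gt0] := posnP k.
  have /size0nil -> : size (spectrum M) = 0%N by rewrite size_spectrum.
  rewrite big_nil /mxtrace big1 // => i _.
  by have := ltn_ord i; rewrite [X in (_ < X)%N]k0.
apply: oppr_inj; rewrite -coefPn_prod_XsubC ?size_spectrum -?lt0n //.
by rewrite -char_poly_spectrum char_poly_trace.
Qed.

End Spectrum.

Lemma vN_entropy_flat (R : realType) k (M : 'M[R[i]]_k) (lam : R) :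
  0 < lam -> M *m M = lam%:C%C *: M -> \tr M = 1 -> vN_entropy M = - log2 lam.
Proof.
move=> lam_gt0 MM trM; rewrite /vN_entropy.
have -> : \sum_(z <- spectrum M) xlog2 (complex.Re z) =
          \sum_(z <- spectrum M) complex.Re z * log2 lam.
  rewrite big_seq [RHS]big_seq; apply: eq_bigr => z.
  move=> /eigenvalue_spectrum /(eigenvalue_scaled_idem MM).
  by rewrite /xlog2 => -[] -> /=; rewrite ?eqxx ?mul0r // (gt_eqF lam_gt0).
by rewrite -mulr_suml -Re_sum sum_spectrum trM mul1r.
Qed.

Section SubgroupRelation.
Variables (G H : finZmodType) (p : G -> H -> bool).
Hypotheses (p00 : p 0 0) (pB : forall x y c e, p x c -> p y e -> p (x - y) (c - e)).

Definition slice x := [set c | p x c].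
Definition overlap x y := #|slice x :&: slice y|.
(* For V = {(x, c) | p x c}, these are the numbers K and L of elements of V
   supported in G and in H respectively. *)
Definition kerl := #|[set x | p x 0]|.
Definition kerr := #|slice 0|.

Lemma in_slice x c : (c \in slice x) = p x c.
Proof. by rewrite inE. Qed.

Lemma pD x y c e : p x c -> p y e -> p (x + y) (c + e).
Proof. by move=> pxc pye; have := pB pxc (pB p00 pye); rewrite !sub0r !opprK. Qed.

Lemma slice_shift x y : p (x - y) 0 -> slice y = slice x.
Proof.
move=> pxy; apply/setP => c; rewrite !in_slice; apply/idP/idP => pc.
  by have := pD pc pxy; rewrite addr0 subrKC.
by have := pB pc pxy; rewrite subr0 opprB subrKC.
Qed.

Lemma card_slice x : slice x != set0 -> #|slice x| = kerr.
Proof.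
case/set0Pn=> c0; rewrite in_slice => pxc0.
rewrite /kerr -(card_imset _ (subIr c0)); apply: eq_card => e.
rewrite in_slice; apply/imsetP/idP => [[c] | p0e].
  by rewrite in_slice => pxc ->; have := pB pxc pxc0; rewrite subrr.
exists (e + c0); last by rewrite addrK.
by rewrite in_slice; have := pD p0e pxc0; rewrite add0r.
Qed.

Lemma overlapE x y : overlap x y = if p (x - y) 0 then #|slice x| else 0%N.
Proof.
rewrite /overlap; case: ifP => pxy; first by rewrite (slice_shift pxy) setIid.
apply/eqP; rewrite cards_eq0; apply/eqP/setP => c; rewrite !inE.
by apply/negP => /andP[pxc pyc]; have := pB pxc pyc; rewrite subrr pxy.
Qed.

Lemma card_kerl_shift x : #|[set y | p (x - y) 0]| = kerl.
Proof.
rewrite /kerl -(card_imset _ (inv_inj (subKr x))); apply: eq_card => z.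
by rewrite (can2_imset_pre _ (subKr x) (subKr x)) !inE.
Qed.

Lemma overlap_mul x z :
  (\sum_y overlap x y * overlap y z = kerl * kerr * overlap x z)%N.
Proof.
have -> : (\sum_y overlap x y * overlap y z =
           \sum_(y | p (x - y)%R 0%R) #|slice x| * overlap x z)%N.
  rewrite [RHS]big_mkcond; apply: eq_bigr => y _.
  case: ifP => pxy; last by rewrite overlapE pxy mul0n.
  by rewrite overlapE pxy /overlap (slice_shift pxy).
rewrite sum_nat_const -mulnA; congr (_ * _)%N.
  by rewrite -(card_kerl_shift x); apply: eq_card => y; rewrite inE.
have [x0 | /card_slice -> //] := eqVneq (slice x) set0.
by rewrite /overlap x0 set0I cards0 !muln0.
Qed.

Lemma sum_overlap_diag :
  (\sum_x overlap x x)%N = #|[set xc : G * H | p xc.1 xc.2]|.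
Proof.
rewrite -sum1_card (eq_bigl (fun xc : G * H => p xc.1 xc.2)) => [|xc]; last first.
  by rewrite inE.
rewrite -(pair_big_dep xpredT p (fun _ _ => 1%N)) /=.
apply: eq_bigr => x _; rewrite /overlap setIid sum1_card.
by apply: eq_card => c; rewrite in_slice.
Qed.

Lemma kerl_gt0 : (0 < kerl)%N.
Proof. by apply/card_gt0P; exists 0; rewrite inE. Qed.

Lemma kerr_gt0 : (0 < kerr)%N.
Proof. by apply/card_gt0P; exists 0; rewrite in_slice. Qed.

Definition overlap_mx (F : pzRingType) : 'M[F]_#|G| :=
  \matrix_(i, j) (overlap (enum_val i) (enum_val j))%:R.

Lemma overlap_mx_sq (F : pzRingType) :
  overlap_mx F *m overlap_mx F = (kerl * kerr)%:R *: overlap_mx F.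
Proof.
apply/matrixP => i j; rewrite !mxE (reindex (@enum_rank _)) /=; last first.
  by apply: onW_bij; apply: enum_rank_bij.
under eq_bigr do rewrite !mxE !enum_rankK -natrM.
by rewrite -natr_sum overlap_mul natrM.
Qed.

Lemma mxtrace_overlap_mx (F : pzRingType) :
  \tr (overlap_mx F) = #|[set xc : G * H | p xc.1 xc.2]|%:R.
Proof.
rewrite /mxtrace (reindex (@enum_rank _)) /=; last first.
  by apply: onW_bij; apply: enum_rank_bij.
under eq_bigr do rewrite !mxE enum_rankK.
by rewrite -natr_sum sum_overlap_diag.
Qed.

End SubgroupRelation.

Section Glue.
Variables (T Q : finType) (X : {set T}).
Implicit Types (x : cfg Q X) (c : cfg Q (~: X)) (s : {ffun T -> Q}).

Definition resl s : cfg Q X := [ffun i => s (val i)].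
Definition resr s : cfg Q (~: X) := [ffun i => s (val i)].

Lemma glue_in x c (i : {i | i \in X}) : glue x c (val i) = x i.
Proof.
rewrite /glue ffunE; case: {-}_ / boolP => [iX | /negP[]]; last exact: valP.
by congr (x _); apply: val_inj.
Qed.

Lemma glue_out x c (j : {j | j \in ~: X}) : glue x c (val j) = c j.
Proof.
rewrite /glue ffunE; case: {-}_ / boolP => [jX | jX]; last first.
  by congr (c _); apply: val_inj.
by have := valP j; rewrite inE jX.
Qed.

Lemma resl_glue x c : resl (glue x c) = x.
Proof. by apply/ffunP => i; rewrite ffunE glue_in. Qed.

Lemma resr_glue x c : resr (glue x c) = c.
Proof. by apply/ffunP => j; rewrite ffunE glue_out. Qed.

Lemma glue_res s : glue (resl s) (resr s) = s.
Proof.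
by apply/ffunP => k; rewrite /glue ffunE; case: {-}_ / boolP => ?; rewrite ffunE.
Qed.

Lemma card_glue (P : pred {ffun T -> Q}) :
  #|[set xc : cfg Q X * cfg Q (~: X) | P (glue xc.1 xc.2)]| = #|[set s | P s]|.
Proof.
have glueK : cancel (fun xc : cfg Q X * cfg Q (~: X) => glue xc.1 xc.2)
                    (fun s => (resl s, resr s)).
  by case=> x c /=; rewrite resl_glue resr_glue.
rewrite -(card_imset _ (can_inj glueK)); apply: eq_card => s; rewrite inE.
apply/imsetP/idP => [[xc] | Ps]; first by rewrite inE => Pxc ->.
by exists (resl s, resr s); rewrite ?inE /= glue_res.
Qed.

Lemma resl_eq_cst (z : Q) s :
  (resl s == [ffun=> z]) = [forall k, (k \in X) ==> (s k == z)].
Proof.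
apply/eqP/forallP => [sX k | sX]; last first.
  apply/ffunP => i; rewrite !ffunE; apply/eqP.
  by have := sX (val i); rewrite (valP i).
apply/implyP => kX.
by move/ffunP: sX => /(_ (exist _ k kX)); rewrite !ffunE /= => ->.
Qed.

Lemma resr_eq_cst (z : Q) s :
  (resr s == [ffun=> z]) = [forall k, (k \notin X) ==> (s k == z)].
Proof.
apply/eqP/forallP => [sX k | sX]; last first.
  apply/ffunP => j; rewrite !ffunE; apply/eqP.
  by have := sX (val j); rewrite -in_setC (valP j).
apply/implyP; rewrite -in_setC => kX.
by move/ffunP: sX => /(_ (exist _ k kX)); rewrite !ffunE /= => ->.
Qed.

End Glue.

Section GlueZmod.
Variables (T : finType) (Q : finZmodType) (X : {set T}).
Implicit Types (x y : cfg Q X) (c e : cfg Q (~: X)).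

Lemma glueB x y c e : glue (x - y) (c - e) = glue x c - glue y e.
Proof.
by apply/ffunP => k; rewrite /glue !ffunE; case: {-}_ / boolP => ?; rewrite !ffunE.
Qed.

Lemma glue0 : glue (0 : cfg Q X) (0 : cfg Q (~: X)) = 0.
Proof. by have := glueB 0 0 0 0; rewrite !subrr. Qed.

Lemma card_glue0r (P : pred {ffun T -> Q}) :
  #|[set x : cfg Q X | P (glue x 0)]| =
  #|[set s | P s && [forall k, (k \notin X) ==> (s k == 0)]]|.
Proof.
rewrite -(card_imset _ (can_inj (fun x : cfg Q X => resl_glue x 0))).
apply: eq_card => s.
rewrite inE -(resr_eq_cst X); apply/imsetP/andP => [[x] | [Ps /eqP s0]].
  by rewrite inE => Px ->; rewrite resr_glue.
by exists (resl X s); rewrite ?inE -[0]s0 glue_res.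
Qed.

Lemma card_glue0l (P : pred {ffun T -> Q}) :
  #|[set c : cfg Q (~: X) | P (glue 0 c)]| =
  #|[set s | P s && [forall k, (k \in X) ==> (s k == 0)]]|.
Proof.
rewrite -(card_imset _ (can_inj (fun c : cfg Q (~: X) => resr_glue 0 c))).
apply: eq_card => s.
rewrite inE -(resl_eq_cst X); apply/imsetP/andP => [[c] | [Ps /eqP s0]].
  by rewrite inE => Pc ->; rewrite resl_glue.
by exists (resr X s); rewrite ?inE -[0]s0 glue_res.
Qed.

End GlueZmod.

Section Graph.
Variables (n d : nat).
Implicit Types (s t : {ffun Sys n -> 'F_d}) (a : 'cV['F_d]_n).

Definition in_graph s := Cpart s == Mn d n *m Apart s.

Definition graph_pt a : {ffun Sys n -> 'F_d} :=
  [ffun k => match k with inl i => a i 0 | inr j => (Mn d n *m a) j 0 end].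

Definition nsol (P Q : pred 'I_n) :=
  #|[set a : 'cV['F_d]_n | [forall k, P k ==> (a k 0 == 0)] &&
             [forall k, Q k ==> ((Mn d n *m a) k 0 == 0)]]|.

Lemma in_graph0 : in_graph 0.
Proof.
apply/eqP; have -> : Apart (0 : {ffun Sys n -> 'F_d}) = 0.
  by apply/matrixP => i j; rewrite !mxE !ffunE.
by rewrite mulmx0; apply/matrixP => i j; rewrite !mxE !ffunE.
Qed.

Lemma in_graphB s t : in_graph s -> in_graph t -> in_graph (s - t).
Proof.
move=> /eqP Cs /eqP Ct; apply/eqP.
have -> : Cpart (s - t) = Cpart s - Cpart t by apply/matrixP => i j; rewrite !mxE !ffunE.
have -> : Apart (s - t) = Apart s - Apart t by apply/matrixP => i j; rewrite !mxE !ffunE.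
by rewrite Cs Ct mulmxBr.
Qed.

Lemma Apart_graph_pt a : Apart (graph_pt a) = a.
Proof. by apply/matrixP => i j; rewrite !mxE ffunE (ord1 j). Qed.

Lemma in_graph_pt a : in_graph (graph_pt a).
Proof.
by rewrite /in_graph Apart_graph_pt; apply/eqP/matrixP => i j; rewrite mxE ffunE (ord1 j).
Qed.

Lemma graph_ptK s : in_graph s -> graph_pt (Apart s) = s.
Proof. by move=> /eqP Cs; apply/ffunP => -[i | j]; rewrite ffunE -?Cs mxE. Qed.

Lemma card_in_graph (Z : pred {ffun Sys n -> 'F_d}) :
  #|[set s | in_graph s && Z s]| = #|[set a | Z (graph_pt a)]|.
Proof.
rewrite -(card_imset _ (can_inj Apart_graph_pt)); apply: eq_card => s; rewrite inE.
apply/andP/imsetP => [[gs Zs] | [a]]; first by exists (Apart s); rewrite ?inE graph_ptK.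
by rewrite inE => Za ->; rewrite in_graph_pt.
Qed.

Lemma card_graph : #|[set s | in_graph s]| = #|'cV['F_d]_n|.
Proof.
rewrite -cardsT -(card_in_graph xpredT); apply: eq_card => s.
by rewrite !inE andbT.
Qed.

Lemma forall_graph_pt (P : pred (Sys n)) a :
  [forall k, P k ==> (graph_pt a k == 0)] =
  [forall k, P (inl k) ==> (a k 0 == 0)] &&
  [forall k, P (inr k) ==> ((Mn d n *m a) k 0 == 0)].
Proof.
apply/forallP/andP => [Pa | [/forallP Pl /forallP Pr] [k | k]].
  by split; apply/forallP => k; [have := Pa (inl k) | have := Pa (inr k)]; rewrite ffunE.
- by rewrite ffunE; apply: Pl.
- by rewrite ffunE; apply: Pr.
Qed.

End Graph.

Definition graph_rel n d (X : {set Sys n}) (x : cfg 'F_d X) (c : cfg 'F_d (~: X)) :=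
  in_graph (glue x c).
Arguments graph_rel {n} d X.

Section GraphRel.
Variables (n d : nat) (X : {set Sys n}).
Local Notation rel := (graph_rel d X).

Lemma graph_rel00 : rel 0 0.
Proof. by rewrite /graph_rel glue0 in_graph0. Qed.

Lemma graph_relB x y c e : rel x c -> rel y e -> rel (x - y) (c - e).
Proof. by rewrite /graph_rel glueB; apply: in_graphB. Qed.

Lemma kerl_graph_rel :
  kerl rel = nsol d (fun k => inl k \notin X) (fun k => inr k \notin X).
Proof.
rewrite /kerl (card_glue0r X (@in_graph n d)) card_in_graph.
by apply: eq_card => a; rewrite !inE forall_graph_pt.
Qed.

Lemma kerr_graph_rel :
  kerr rel = nsol d (fun k => inl k \in X) (fun k => inr k \in X).
Proof.
rewrite /kerr /slice (card_glue0l X (@in_graph n d)) card_in_graph.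
by apply: eq_card => a; rewrite !inE forall_graph_pt.
Qed.

End GraphRel.

Section ChoiUdn.
Variables (R : realType) (n d : nat).
Local Notation N := #|'cV['F_d]_n|.

Lemma choi_amp_Udn s :
  choi_amp (Udn R d n) s = (Num.sqrt (N%:R : R))^-1%:C%C * (in_graph s)%:R.
Proof.
rewrite /choi_amp (bigD1 (Apart s)) //= big1 => [|a' a'_neq].
  by rewrite addr0 /phiplus eqxx mulr1 /Udn mxE !enum_rankK mulrC.
by rewrite /phiplus eq_sym (negbTE a'_neq) /= !mulr0.
Qed.

Lemma choi_Udn s t :
  choi (Udn R d n) s t = (N%:R : R)^-1%:C%C * (in_graph s && in_graph t)%:R.
Proof.
rewrite /choi !choi_amp_Udn.
case: (in_graph s); case: (in_graph t);
  rewrite ?mulr1n ?mulr0n ?mulr0 ?mul0r ?conjc0 ?mulr0 //.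
by rewrite !mulr1 conjc_real -rmorphM -invfM -expr2 sqr_sqrtr ?ler0n.
Qed.

Lemma reduced_choi_Udn X :
  reduced (choi (Udn R d n)) X = (N%:R : R)^-1%:C%C *: overlap_mx (graph_rel d X) R[i].
Proof.
apply/matrixP => i j; rewrite !mxE.
under eq_bigr do rewrite choi_Udn.
rewrite -mulr_sumr -natr_sum; congr (_ * _%:R).
rewrite /overlap -sum1_card [RHS]big_mkcond; apply: eq_bigr => c _.
by rewrite in_setI !in_slice /graph_rel; case: (_ && _).
Qed.

Lemma entropy_choi_Udn X :
  entropy (choi (Udn R d n)) X =
    log2 (N%:R : R)
    - log2 (nsol d (fun k => inl k \notin X) (fun k => inr k \notin X))%:R
    - log2 (nsol d (fun k => inl k \in X) (fun k => inr k \in X))%:R.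
Proof.
have N_gt0 : (0 < N)%N by apply/card_gt0P; exists 0.
have Kl_gt0 := kerl_gt0 (graph_rel00 d X).
have Kr_gt0 := kerr_gt0 (graph_rel00 d X).
rewrite -kerl_graph_rel -kerr_graph_rel /entropy reduced_choi_Udn.
pose lam : R := (N%:R)^-1 * (kerl (graph_rel d X) * kerr (graph_rel d X))%:R.
rewrite (vN_entropy_flat (lam := lam)).
- rewrite log2M ?invr_gt0 ?ltr0n ?muln_gt0 ?Kl_gt0 // log2V ?ltr0n // log2_natM //.
  by rewrite !opprD opprK addrA.
- by rewrite mulr_gt0 ?invr_gt0 ?ltr0n ?muln_gt0 ?Kl_gt0.
- rewrite -scalemxAl -scalemxAr.
  rewrite (overlap_mx_sq (graph_rel00 d X) (@graph_relB n d X)) !scalerA.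
  congr (_ *: _).
  by rewrite /lam (rmorphM (real_complex R)) (rmorph_nat (real_complex R)) mulrAC.
- rewrite mxtraceZ mxtrace_overlap_mx (card_glue X (@in_graph n d)) card_graph.
  by rewrite -(rmorph_nat (real_complex R)) -rmorphM mulVf ?rmorph1 // pnatr_eq0 -lt0n.
Qed.

End ChoiUdn.

Lemma card_ker_surj (G H : finZmodType) (f : G -> H) :
  {morph f : x y / x - y} -> (forall h, exists x, f x = h) ->
  (#|[set x | f x == 0%R]| * #|H|)%N = #|G|.
Proof.
move=> fB f_surj.
have f0 : f 0 = 0 by rewrite -(subrr 0) fB subrr.
have fN y : f (- y) = - f y by rewrite -sub0r fB f0 sub0r.
have fD x y : f (x + y) = f x + f y by rewrite -{1}[y]opprK fB fN opprK.
have card_fiber h : #|[set x | f x == h]| = #|[set x | f x == 0]|.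
  have [x0 fx0] := f_surj h.
  rewrite -[RHS](card_imset _ (addIr x0)); apply: eq_card => x; rewrite inE.
  apply/eqP/imsetP => [fx | [y]]; last first.
    by rewrite inE => /eqP fy ->; rewrite fD fy fx0 add0r.
  by exists (x - x0); rewrite ?subrK // inE fB fx fx0 subrr.
rewrite mulnC -sum_nat_const -[#|G|]sum1_card (partition_big f xpredT) //=.
apply: eq_bigr => h _; rewrite sum1_card -(card_fiber h).
by apply: eq_card => x; rewrite !inE.
Qed.

Section Mn.
Variables (n d : nat).
Implicit Types (a c : 'cV['F_d]_n) (i j k : 'I_n) (t : 'F_d) (P Q : pred 'I_n).
Local Notation M := (Mn d n).
Local Notation nsol := (@nsol n d).

Lemma MnE a k : (M *m a) k 0 = a k 0 + \sum_l a l 0.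
Proof.
rewrite mxE (eq_bigr (fun l => (k == l)%:R * a l 0 + a l 0)) => [|l _]; last first.
  by rewrite !mxE mulrDl mul1r.
rewrite big_split /= (bigD1 k) //= eqxx mul1r big1 ?addr0 // => l /negbTE.
by rewrite eq_sym => ->; rewrite mul0r.
Qed.

Lemma sum_Mn a : \sum_l (M *m a) l 0 = n.+1%:R * \sum_l a l 0.
Proof.
under eq_bigr do rewrite MnE.
by rewrite big_split /= sumr_const card_ord mulr_natl mulrS.
Qed.

Definition single i t : 'cV['F_d]_n := \col_k (if k == i then t else 0).

Lemma sum_single i t : \sum_l single i t l 0 = t.
Proof.
rewrite (bigD1 i) //= big1 => [|l /negbTE li]; first by rewrite mxE eqxx addr0.
by rewrite mxE li.
Qed.

Lemma Mn_single i t k : (M *m single i t) k 0 = (if k == i then t else 0) + t.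
Proof. by rewrite MnE sum_single mxE. Qed.

Lemma single_eta a i : (forall k, k != i -> a k 0 = 0) -> a = single i (a i 0).
Proof.
move=> a_supp; apply/matrixP => k l; rewrite (ord1 l) mxE.
by case: eqVneq => [-> // | /a_supp].
Qed.

Lemma single0 i : single i 0 = 0.
Proof. by apply/matrixP => k l; rewrite !mxE if_same. Qed.

Hypotheses (d_prime : prime d) (n_lt_d : (n.+1 < d)%N).

Lemma natrFp_neq0 m : (0 < m < d)%N -> (m%:R : 'F_d) != 0.
Proof.
case/andP=> m_gt0 m_lt_d; apply/eqP => m0; have := val_Fp_nat d_prime m.
by rewrite m0 modn_small // => m_eq0; rewrite -m_eq0 in m_gt0.
Qed.

Lemma n1_neq0 : (n.+1%:R : 'F_d) != 0.
Proof. by rewrite natrFp_neq0. Qed.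

Definition Mn_inv c : 'cV['F_d]_n := \col_k (c k 0 - (n.+1%:R)^-1 * \sum_l c l 0).

Lemma mulMnK : cancel (fun a : 'cV['F_d]_n => M *m a) Mn_inv.
Proof.
move=> a; apply/matrixP => k l; rewrite (ord1 l) mxE sum_Mn MnE.
by rewrite mulrA mulVf ?n1_neq0 // mul1r addrK.
Qed.

Lemma Mn_invK : cancel Mn_inv (fun a : 'cV['F_d]_n => M *m a).
Proof.
move=> c; apply/matrixP => k l; rewrite (ord1 l) MnE.
under [X in _ + X]eq_bigr do rewrite mxE.
rewrite mxE sumrB sumr_const card_ord.
set s := \sum_l c l 0; set u := (n.+1%:R)^-1 * s.
have : u * n.+1%:R = s by rewrite /u mulrAC mulVf ?n1_neq0 // mul1r.
by rewrite -mulr_natr mulrS => <-; ring.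
Qed.

Lemma Mn_inj : injective (fun a : 'cV['F_d]_n => M *m a).
Proof. exact: can_inj mulMnK. Qed.

Lemma two_neq0 : (n > 0)%N -> (2%:R : 'F_d) != 0.
Proof. by move=> n_gt0; rewrite natrFp_neq0 //; apply: leq_ltn_trans n_lt_d. Qed.

Lemma single_eq0 a i l :
  (forall k, k != i -> a k 0 = 0) -> (M *m a) l 0 = 0 -> a = 0.
Proof.
move=> a_supp; rewrite (single_eta a_supp) Mn_single; set t := a i 0 => Mt0.
suff -> : t = 0 by rewrite single0.
move: Mt0; case: ifP => _; last by rewrite add0r.
move/eqP; rewrite -mulr2n -mulr_natr mulf_eq0 (negbTE (two_neq0 _)) ?orbF.
  by move/eqP.
exact: leq_ltn_trans (leq0n _) (ltn_ord i).
Qed.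

Lemma card_cV : #|'cV['F_d]_n| = (d ^ n)%N.
Proof. by rewrite card_mx card_Fp // muln1. Qed.

Lemma exists_neq i : (1 < n)%N -> exists k : 'I_n, k != i.
Proof.
move=> n_gt1; have n_gt0 := ltnW n_gt1.
have [-> | i_neq] := eqVneq i (Ordinal n_gt0); first by exists (Ordinal n_gt1).
by exists (Ordinal n_gt0); rewrite eq_sym.
Qed.

Lemma card_supp1 i :
  #|[set a : 'cV['F_d]_n | [forall k, (k != i) ==> (a k 0 == 0)]]| = d.
Proof.
have single_inj : injective (single i) by move=> t u /matrixP /(_ i 0); rewrite !mxE eqxx.
rewrite -[RHS](card_Fp d_prime) -cardsT -(card_imset _ single_inj).
apply: eq_card => a; rewrite inE; apply/forallP/imsetP => [a_supp | [t _ ->] k].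
  exists (a i 0) => //; apply: single_eta => k ki.
  by apply/eqP; have := a_supp k; rewrite ki.
by rewrite mxE; case: eqP.
Qed.

Lemma nsol_swap P Q : nsol P Q =
  #|[set c : 'cV['F_d]_n | [forall k, P k ==> (Mn_inv c k 0 == 0)] &&
                           [forall k, Q k ==> (c k 0 == 0)]]|.
Proof.
rewrite /nsol -(card_imset _ Mn_inj); apply: eq_card => c; rewrite inE.
apply/imsetP/idP => [[a] | c_sol]; first by rewrite inE => a_sol ->; rewrite mulMnK.
by exists (Mn_inv c); rewrite ?inE ?Mn_invK.
Qed.

Lemma nsol_trivial P Q :
  (forall a, (forall k, P k -> a k 0 = 0) ->
             (forall k, Q k -> (M *m a) k 0 = 0) -> a = 0) ->
  nsol P Q = 1%N.
Proof.
move=> sol0; rewrite -(cards1 (0 : 'cV['F_d]_n)); apply: eq_card => a.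
rewrite !inE; apply/andP/eqP => [[/forallP aP /forallP aQ] | ->].
  apply: sol0 => k k_in; apply/eqP; [move: (aP k) | move: (aQ k)]; by rewrite k_in.
by rewrite mulmx0; split; apply/forallP => k; rewrite mxE eqxx implybT.
Qed.

Lemma nsol_pred0 : nsol pred0 pred0 = #|'cV['F_d]_n|.
Proof. by apply: eq_card => a; rewrite !inE; apply/andP; split; apply/forallP. Qed.

Lemma nsol_predT_l Q : nsol xpredT Q = 1%N.
Proof.
by apply: nsol_trivial => a a0 _; apply/matrixP => k l; rewrite (ord1 l) a0 // mxE.
Qed.

Lemma nsol_predT_r P : nsol P xpredT = 1%N.
Proof.
apply: nsol_trivial => a _ Ma0; apply: Mn_inj; rewrite /= mulmx0.
by apply/matrixP => k l; rewrite (ord1 l) Ma0 // mxE.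
Qed.

Lemma nsol_neq_l i : nsol (fun k => k != i) pred0 = d.
Proof.
rewrite -[RHS](card_supp1 i); apply: eq_card => a; rewrite !inE.
by rewrite [X in _ && X](_ : _ = true) ?andbT //; apply/forallP.
Qed.

Lemma nsol_neq_r j : nsol pred0 (fun k => k != j) = d.
Proof.
rewrite nsol_swap -[RHS](card_supp1 j); apply: eq_card => c; rewrite !inE.
by rewrite [X in X && _](_ : _ = true) //; apply/forallP.
Qed.

Lemma nsol_eq_l i : (nsol (fun k => k == i) pred0 * d)%N = (d ^ n)%N.
Proof.
rewrite -card_cV -[X in (_ * X)%N](card_Fp d_prime).
rewrite -(@card_ker_surj _ _ (fun a : 'cV['F_d]_n => a i 0)).
- congr (_ * _)%N; apply: eq_card => a; rewrite !inE.
  apply/andP/idP => [[/forallP ai _] | ai]; first by have := ai i; rewrite eqxx.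
  by split; apply/forallP => k //; apply/implyP => /eqP ->.
- by move=> a b; rewrite !mxE.
- by move=> t; exists (single i t); rewrite mxE eqxx.
Qed.

Lemma nsol_eq_r j : (nsol pred0 (fun k => k == j) * d)%N = (d ^ n)%N.
Proof.
rewrite -card_cV -[X in (_ * X)%N](card_Fp d_prime).
rewrite -(@card_ker_surj _ _ (fun a : 'cV['F_d]_n => (M *m a) j 0)).
- congr (_ * _)%N; apply: eq_card => a; rewrite !inE.
  apply/andP/idP => [[_ /forallP Maj] | Maj]; first by have := Maj j; rewrite eqxx.
  by split; apply/forallP => k //; apply/implyP => /eqP ->.
- by move=> a b; rewrite mulmxBr !mxE.
- by move=> t; exists (Mn_inv (single j t)); rewrite Mn_invK mxE eqxx.
Qed.

Lemma nsol_eq_lr i j : (1 < n)%N ->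
  (nsol (fun k => k == i) (fun k => k == j) * (d * d))%N = (d ^ n)%N.
Proof.
move=> n_gt1; rewrite -card_cV -[X in (_ * (X * _))%N](card_Fp d_prime).
rewrite -[X in (_ * (_ * X))%N](card_Fp d_prime) -card_prod.
rewrite -(@card_ker_surj _ _ (fun a : 'cV['F_d]_n => (a i 0, (M *m a) j 0))).
- congr (_ * _)%N; apply: eq_card => a; rewrite !inE /= xpair_eqE.
  apply/andP/andP => [[/forallP ai /forallP Maj] | [ai Maj]].
    by have := ai i; have := Maj j; rewrite !eqxx.
  by split; apply/forallP => k; apply/implyP => /eqP ->.
- by move=> a b; rewrite mulmxBr !mxE.
(* When i = j, a second coordinate k != i is needed to reach every (u, v). *)
case=> u v; have two_neq0 := two_neq0 (ltnW n_gt1).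
have [<- | ij] := eqVneq i j.
  have [k ki] := exists_neq i n_gt1.
  exists (single i u + single k (v - 2%:R * u)); congr (_, _).
    by rewrite !mxE eqxx eq_sym (negbTE ki) addr0.
  by rewrite mulmxDr mxE !Mn_single eqxx eq_sym (negbTE ki) add0r; ring.
exists (single i u + single j ((v - u) / 2%:R)); congr (_, _).
  by rewrite !mxE eqxx (negbTE ij) addr0.
by rewrite mulmxDr mxE !Mn_single eqxx eq_sym (negbTE ij) add0r; field.
Qed.

Lemma nsol_neq_lr i j : (1 < n)%N ->
  nsol (fun k => k != i) (fun k => k != j) = 1%N.
Proof.
move=> n_gt1; have [k kj] := exists_neq j n_gt1.
by apply: nsol_trivial => a a_supp Ma0; apply: (single_eq0 (l := k) a_supp); apply: Ma0.
Qed.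

Lemma nsol_neq_eq i j : nsol (fun k => k != i) (fun k => k == j) = 1%N.
Proof.
by apply: nsol_trivial => a a_supp Ma0; apply: (single_eq0 (l := j) a_supp); apply: Ma0.
Qed.

Lemma nsol_eq_neq i j : nsol (fun k => k == i) (fun k => k != j) = 1%N.
Proof.
apply: nsol_trivial => a ai0 Ma_supp.
suff t0 : (M *m a) j 0 = 0.
  by apply: Mn_inj; rewrite /= mulmx0 (single_eta Ma_supp) t0 single0.
set t := (M *m a) j 0; have := ai0 i (eqxx i).
have -> : a = Mn_inv (single j t) by rewrite /t -(single_eta Ma_supp) mulMnK.
rewrite mxE sum_single mxE; case: eqP => [_ | _].
  move=> /eqP; rewrite subr_eq0 => /eqP t_eq.
  have : t * n%:R = 0.
    have -> : t * n%:R = t * n.+1%:R - t by rewrite mulrSr mulrDr mulr1 addrK.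
    by rewrite {1}t_eq mulrAC mulVf ?n1_neq0 // mul1r subrr.
  move/eqP; rewrite mulf_eq0 (negbTE (natrFp_neq0 _)) ?orbF => [/eqP // |].
  by rewrite (leq_ltn_trans (leq0n i) (ltn_ord i)) (ltn_trans (ltnSn n) n_lt_d).
by rewrite sub0r => /eqP; rewrite oppr_eq0 mulf_eq0 invr_eq0 (negbTE n1_neq0) => /eqP.
Qed.

End Mn.

Lemma Udn_unitary (R : realType) (n d : nat) :
  prime d -> (n.+1 < d)%N -> Udn R d n \is unitarymx.
Proof.
move=> d_prime n_lt_d; apply/unitarymxP/matrixP => y y'.
rewrite !mxE (reindex (@enum_rank _)) /=; last first.
  by apply: onW_bij; apply: enum_rank_bij.
set a0 := Mn_inv (enum_val y).
rewrite (bigD1 a0) //= big1 => [|a a_neq].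
  rewrite !mxE !enum_rankK /a0 Mn_invK // eqxx mul1r conjC_nat addr0.
  by rewrite (inj_eq enum_val_inj) eq_sym.
rewrite !mxE !enum_rankK; case: eqP => [ya | _]; last by rewrite mul0r.
by case/eqP: a_neq; rewrite /a0 ya mulMnK.
Qed.

Lemma card_cfg (Q T : finType) (X : {set T}) : #|cfg Q X| = (#|Q| ^ #|X|)%N.
Proof. by rewrite card_ffun card_sig. Qed.

Lemma card_imset_neq (T : finType) n (f : 'I_n -> T) (i : 'I_n) :
  injective f -> #|[set f k | k : 'I_n & k != i]| = n.-1.
Proof.
move=> f_inj; rewrite card_imset //.
transitivity #|predC1 i|; last by rewrite cardC1 card_ord.
by apply: eq_card => k; rewrite !inE.
Qed.

Lemma I3_set0 (R : realType) (T Q : finType) (rho : kernel R T Q) (X Z : {set T}) :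
  I3 rho X set0 Z = entropy rho set0.
Proof. by rewrite /I3 /mutinf setU0 set0U; ring. Qed.

Section SysSets.
Variable n : nat.
Implicit Types (P : pred 'I_n) (k : 'I_n).

Lemma inl_in_inl_imset P k : (inl k \in [set (inl x : Sys n) | x : 'I_n & P x]) = P k.
Proof. by rewrite mem_imset ?inE // => x y []. Qed.

Lemma inr_in_inl_imset P k : (inr k \in [set (inl x : Sys n) | x : 'I_n & P x]) = false.
Proof. by apply/imsetP => -[]. Qed.

End SysSets.

Definition memSysE := (inl_in_inl_imset, inr_in_inl_imset, in_setU, in_set1, orbF, orFb).

Lemma entropy_choi_UdnE (R : realType) n d (X : {set Sys n}) (Pc Qc P Q : pred 'I_n) :
  (forall k, (inl k \notin X) = Pc k) -> (forall k, (inr k \notin X) = Qc k) ->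
  (forall k, (inl k \in X) = P k) -> (forall k, (inr k \in X) = Q k) ->
  entropy (choi (Udn R d n)) X =
    log2 (#|'cV['F_d]_n|%:R : R) - log2 (nsol d Pc Qc)%:R - log2 (nsol d P Q)%:R.
Proof.
move=> ePc eQc eP eQ; rewrite entropy_choi_Udn.
by congr (_ - log2 _%:R - log2 _%:R); apply: eq_card => a; rewrite !inE;
  congr (_ && _); apply: eq_forallb => k; rewrite ?ePc ?eQc ?eP ?eQ.
Qed.

Lemma entropy_choi_Udn_set0 (R : realType) n d :
  entropy (choi (Udn R d n)) set0 = 0.
Proof.
rewrite (@entropy_choi_UdnE _ _ _ _ xpredT xpredT pred0 pred0);
  try by move=> k; rewrite inE.
by rewrite nsol_predT_l nsol_pred0 log2_1 subr0 subrr.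
Qed.

Section Entropies.
Variables (R : realType) (n d : nat) (i j : 'I_n).
Hypotheses (d_prime : prime d) (n_lt_d : (n.+1 < d)%N).
Local Notation S X := (entropy (choi (Udn R d n)) X).
Local Notation LN := (log2 ((d ^ n)%:R : R)).
Local Notation LD := (log2 (d%:R : R)).
Local Notation Ai := [set (inl i : Sys n)].
Local Notation Aic := [set (inl k : Sys n) | k : 'I_n & k != i].
Local Notation Cj := [set (inr j : Sys n)].

Let log2_cofactor_dn c m : (c * m = d ^ n)%N -> log2 (c%:R : R) = LN - log2 m%:R.
Proof. by move=> cm; rewrite (log2_cofactor _ cm) // expn_gt0 prime_gt0. Qed.

Lemma entropy_Ai : S Ai = LD.
Proof.
rewrite (@entropy_choi_UdnE _ _ _ _ (fun k => k != i) xpredT (fun k => k == i) pred0);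
  try by move=> k; rewrite !memSysE.
rewrite card_cV // nsol_predT_r // (log2_cofactor_dn (nsol_eq_l d_prime i)) log2_1.
by ring.
Qed.

Lemma entropy_Aic : S Aic = LN - LD.
Proof.
rewrite (@entropy_choi_UdnE _ _ _ _ (fun k => k == i) xpredT (fun k => k != i) pred0);
  try by move=> k; rewrite !memSysE ?negbK.
by rewrite card_cV // nsol_predT_r // nsol_neq_l // log2_1 subr0.
Qed.

Lemma entropy_AiAic : S (Ai :|: Aic) = LN.
Proof.
rewrite (@entropy_choi_UdnE _ _ _ _ pred0 xpredT xpredT pred0);
  try by move=> k; rewrite !memSysE /= ?orbN.
by rewrite card_cV // nsol_predT_r // nsol_predT_l // log2_1 !subr0.
Qed.

Lemma entropy_Cj : S Cj = LD.
Proof.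
rewrite (@entropy_choi_UdnE _ _ _ _ xpredT (fun k => k != j) pred0 (fun k => k == j));
  try by move=> k; rewrite !memSysE.
rewrite card_cV // nsol_predT_l // (log2_cofactor_dn (nsol_eq_r d_prime n_lt_d j)).
by rewrite log2_1; ring.
Qed.

Lemma entropy_AiCj : (1 < n)%N -> S (Ai :|: Cj) = 2%:R * LD.
Proof.
move=> n_gt1.
rewrite (@entropy_choi_UdnE _ _ _ _ (fun k => k != i) (fun k => k != j)
                                    (fun k => k == i) (fun k => k == j));
  try by move=> k; rewrite !memSysE.
rewrite card_cV // nsol_neq_lr //.
rewrite (log2_cofactor_dn (nsol_eq_lr d_prime n_lt_d i j n_gt1)).
by rewrite log2_natM ?prime_gt0 // log2_1; ring.
Qed.

Lemma entropy_AicCj : S (Aic :|: Cj) = LN.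
Proof.
rewrite (@entropy_choi_UdnE _ _ _ _ (fun k => k == i) (fun k => k != j)
                                    (fun k => k != i) (fun k => k == j));
  try by move=> k; rewrite !memSysE ?negbK.
by rewrite card_cV // nsol_eq_neq // nsol_neq_eq // log2_1 !subr0.
Qed.

Lemma entropy_AiAicCj : S (Ai :|: (Aic :|: Cj)) = LN - LD.
Proof.
rewrite (@entropy_choi_UdnE _ _ _ _ pred0 (fun k => k != j) xpredT (fun k => k == j));
  try by move=> k; rewrite !memSysE /= ?orbN.
by rewrite card_cV // nsol_neq_r // nsol_predT_l // log2_1 subr0.
Qed.

Lemma I3_choi_Udn : (1 < n)%N -> I3 (choi (Udn R d n)) Ai Aic Cj = - 2%:R * LD.
Proof.
move=> n_gt1; rewrite /I3 /mutinf entropy_Ai entropy_Aic entropy_AiAic entropy_Cj.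
by rewrite entropy_AiCj // entropy_AicCj entropy_AiAicCj; ring.
Qed.

End Entropies.

Unset Implicit Arguments.

Theorem proposition13 (R : realType) (n d : nat) (hn : (1 <= n)%N)
    (hd : prime d) (hdn : (n.+1 < d)%N) :
  Udn R d n \is unitarymx /\ max_I3_scrambling (Udn R d n).
Proof.
split; first exact: Udn_unitary.
move=> i j /=; rewrite /dimsys !card_cfg card_Fp // !cards1 expn1.
rewrite !card_imset_neq; try by move=> ? ? [].
have [n_gt1 | n_le1] := ltnP 1 n.
  have d_le : (d%:R : R) <= (d ^ n.-1)%:R.
    rewrite ler_nat -[X in (X <= _)%N]expn1; apply: leq_pexp2l; first exact: prime_gt0.
    by rewrite -subn1 subn_gt0.
  by rewrite I3_choi_Udn // !(min_l d_le) minxx.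
have n1_0 : n.-1 = 0%N by apply/eqP; rewrite -subn1 subn_eq0.
have Aic0 : [set (inl k : Sys n) | k : 'I_n & k != i] = set0.
  by apply: cards0_eq; rewrite card_imset_neq // => ? ? [].
have d_ge1 : (1 : R) <= d%:R by rewrite ler1n prime_gt0.
rewrite Aic0 I3_set0 entropy_choi_Udn_set0 n1_0 expn0 !(min_r d_ge1) minxx log2_1.
by rewrite mulr0.
Qed.
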